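(* Let $k$ be an algebraically closed field of characteristic zero. Let $Y=\operatorname{Spec} B$, $T=\operatorname{Spec} R$ be irreducible affine $k$-varieties, $f:Y\to T$ a dominant morphism with irreducible and reduced general fibers, $R\subset B$ via $f^*$, and $D$ an $R$-trivial derivation of $B$ such that for every closed point $t\in T$ (maximal ideal $\mathfrak m$) the induced derivation of $B\otimes_R R/\mathfrak m$ is locally nilpotent. Suppose $k_0\subset k$ is a subfield finitely generated over $\mathbb Q$, and $Y_0=\operatorname{Spec}B_0$, $T_0=\operatorname{Spec}R_0$ are geometrically integral affine $k_0$-varieties with a dominant morphism $f_0:Y_0\to T_0$ and an $R_0$-trivial derivation $D_0$ of $B_0$ such that $Y=Y_0\otimes_{k_0}k$, $T=T_0\otimes_{k_0}k$, $f=f_0\otimes_{k_0}k$, $D=D_0\otimes_{k_0}k$. Let $k_1$ be the algebraic closure of $k_0$ in $k$, and put $B_1=B_0\otimes_{k_0}k_1$, $R_1=R_0\otimes_{k_0}k_1$, $Y_1=\operatorname{Spec}B_1$, $T_1=\operatorname{Spec}R_1$, $f_1=f_0\otimes_{k_0}k_1$, $D_1=D_0\otimes_{k_0}k_1$. Then: (1) for every closed point $t_1$ of $T_1$, the restriction of $D_1$ to the fiber $f_1^{-1}(t_1)$ (i.e. the induced derivation of $B_1\otimes_{R_1}R_1/\mathfrak m_1$, $\mathfrak m_1$ the maximal ideal of $t_1$) is locally nilpotent; (2) $D_1$ is locally nilpotent if and only if $D$ is locally nilpotent.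
   Context: A derivation $\delta$ of a ring $A$ is locally nilpotent if for every $a\in A$ some power $\delta^n(a)=0$. An $R$-trivial derivation is one vanishing on $R$. *)

From mathcomp Require Import all_boot all_algebra.
From mathcomp Require Import mpoly.
Set Implicit Arguments. Unset Strict Implicit. Unset Printing Implicit Defensive.
Import GRing.Theory.
Local Open Scope ring_scope.

(* Affine varieties are given by presentations: Y0 = Spec k0[x_1..x_n]/I0,
   T0 = Spec k0[t_1..t_m]/J0, all polynomials seen inside k[x] (resp. k[t]).
   Base change to a subfield S (k0 <= S <= k) is the quotient of S[x] by the
   ideal generated by the same generators. *)

Section Defs.
Variable k : fieldType.

Definition is_subfield (S : k -> Prop) : Prop :=
  [/\ S 0, S 1,
      forall x y, S x -> S y -> S (x - y),
      forall x y, S x -> S y -> S (x * y)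
    & forall x, S x -> x != 0 -> S x^-1].

Definition fg_subfield (S : k -> Prop) : Prop :=
  exists s : seq k, forall x,
    S x <-> (forall S', is_subfield S' -> (forall y, y \in s -> S' y) -> S' x).

Definition alg_closure_in (S : k -> Prop) (x : k) : Prop :=
  exists p : {poly k}, [/\ p != 0, forall i, S p`_i & root p x].

Definition mOver n (S : k -> Prop) (p : {mpoly k[n]}) : Prop :=
  forall mm, S (p@_mm).

Definition in_ideal n (S : k -> Prop) (gens : seq {mpoly k[n]})
    (p : {mpoly k[n]}) : Prop :=
  exists cs : seq {mpoly k[n]},
    [/\ size cs = size gens, forall c, c \in cs -> mOver S c
      & p = \sum_(i < size gens) cs`_i * gens`_i].

Definition prime_over n (S : k -> Prop) (gens : seq {mpoly k[n]}) : Prop :=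
  ~ in_ideal S gens 1 /\
  forall p q, mOver S p -> mOver S q -> in_ideal S gens (p * q) ->
    in_ideal S gens p \/ in_ideal S gens q.

Definition der n (d : n.-tuple {mpoly k[n]}) (p : {mpoly k[n]}) : {mpoly k[n]} :=
  \sum_(i < n) tnth d i * mderiv i p.

Definition lnd_over n (S : k -> Prop) (d : n.-tuple {mpoly k[n]})
    (gens : seq {mpoly k[n]}) : Prop :=
  forall p, mOver S p -> exists N, in_ideal S gens (iter N (der d) p).

Definition fiber_gens n m (gens : seq {mpoly k[n]})
    (phi : m.-tuple {mpoly k[n]}) (a : 'I_m -> k) : seq {mpoly k[n]} :=
  gens ++ [seq tnth phi j - (a j)%:MP | j <- enum 'I_m].

Definition point_over m (S : k -> Prop) (J : seq {mpoly k[m]}) (a : 'I_m -> k)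
  : Prop := (forall j, S (a j)) /\ (forall g, g \in J -> g.@[a] = 0).

(* f^* : S[t]/J -> S[x]/I, t_j |-> phi_j, is injective (f dominant) *)
Definition dominant_over n m (S : k -> Prop) (I : seq {mpoly k[n]})
    (J : seq {mpoly k[m]}) (phi : m.-tuple {mpoly k[n]}) : Prop :=
  forall r : {mpoly k[m]}, mOver S r -> in_ideal S I (comp_mpoly phi r) ->
    in_ideal S J r.

End Defs.

From HB Require Import structures.
From mathcomp Require Import all_boot all_algebra.
From mathcomp Require Import mpoly.
From Stdlib Require Import ClassicalEpsilon.
Set Implicit Arguments. Unset Strict Implicit. Unset Printing Implicit Defensive.
Import GRing.Theory.
Local Open Scope ring_scope.

(* Everything rests on descending ideal membership from k to k1: a polynomial
   over k1 lying in the ideal of k[x] generated by polynomials over k1 already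
   lies in the ideal they generate in k1[x], because once degrees are bounded
   this is the solvability of a linear system with coefficients in k1.  Hence
   local nilpotency of D on the fibres, or on B, descends to D1.  Conversely, if
   D1 is locally nilpotent then every monomial is killed modulo I by a power of
   D, and since I is D-stable the elements of k[x] killed by a power of D
   modulo I form a k-subspace, which is therefore all of k[x]. *)

Section Subfield.
Variables (F : fieldType) (P : F -> Prop).
Hypothesis HP : is_subfield P.

Lemma subfield0 : P 0. Proof. by case: HP. Qed.
Lemma subfield1 : P 1. Proof. by case: HP. Qed.
Lemma subfieldB x y : P x -> P y -> P (x - y).
Proof. by case: HP => _ _ + _ _; apply. Qed.
Lemma subfieldM x y : P x -> P y -> P (x * y).
Proof. by case: HP => _ _ _ + _; apply. Qed.
Lemma subfieldN x : P x -> P (- x).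
Proof. by rewrite -sub0r; apply: subfieldB subfield0. Qed.
Lemma subfieldD x y : P x -> P y -> P (x + y).
Proof. by move=> Px Py; rewrite -[y]opprK; apply/subfieldB/subfieldN. Qed.
Lemma subfieldV x : P x -> P x^-1.
Proof.
have [->|x0] := eqVneq x 0; first by rewrite invr0.
by case: HP => _ _ _ _ /[apply]; apply.
Qed.
Lemma subfield_nat k : P k%:R.
Proof.
elim: k => [|k IHk]; first exact: subfield0.
by rewrite -addn1 natrD; apply/subfieldD/subfield1.
Qed.
Lemma subfield_sum (I : Type) (r : seq I) (Q : pred I) (G : I -> F) :
  (forall i, P (G i)) -> P (\sum_(i <- r | Q i) G i).
Proof. by move=> PG; apply: big_ind => //; [exact: subfield0 | exact: subfieldD]. Qed.

Definition subfield_mem : {pred F} :=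
  fun x => if excluded_middle_informative (P x) then true else false.

Lemma subfield_memP x : reflect (P x) (x \in subfield_mem).
Proof.
by rewrite unfold_in /subfield_mem; case: excluded_middle_informative; constructor.
Qed.

Lemma subfield_mem_divring_closed : divring_closed subfield_mem.
Proof.
split; first exact/subfield_memP/subfield1.
  by move=> x y /subfield_memP Px /subfield_memP Py; apply/subfield_memP/subfieldB.
move=> x y /subfield_memP Px /subfield_memP Py.
exact/subfield_memP/subfieldM/subfieldV.
Qed.
HB.instance Definition _ :=
  GRing.isDivringClosed.Build F subfield_mem subfield_mem_divring_closed.

(* P as a field in its own right, so that the rank theory of mxalgebra and the
   closure properties of algebraicOver (mxpoly) can be used over it. *)
Inductive subfield_elt := SubfieldElt x of x \in subfield_mem.
Definition subfield_val u := let: SubfieldElt x _ := u in x.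
HB.instance Definition _ := [isSub for subfield_val].
HB.instance Definition _ := [Choice of subfield_elt by <:].
HB.instance Definition _ := [SubChoice_isSubComUnitRing of subfield_elt by <:].
HB.instance Definition _ := [SubComUnitRing_isSubIntegralDomain of subfield_elt by <:].
HB.instance Definition _ := [SubIntegralDomain_isSubField of subfield_elt by <:].

Lemma alg_closure_inE x :
  alg_closure_in P x <-> algebraicOver (val : subfield_elt -> F) x.
Proof.
split=> [[p [p0 Pp px]] | [q q0 qx]].
  have Pp' i : p`_i \in subfield_mem by apply/subfield_memP.
  pose q := \poly_(i < size p) (Sub p`_i (Pp' i) : subfield_elt).
  have qE : map_poly val q = p.
    by apply/polyP=> i; rewrite coef_map coef_poly; case: ltnP => // /leq_sizeP ->.
  exists q; last by rewrite qE.
  by rewrite -(map_poly_eq0 val) qE.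
exists (map_poly val q); split; first by rewrite map_poly_eq0.
  by move=> i; rewrite coef_map; apply/subfield_memP/valP.
exact: qx.
Qed.

Lemma alg_closure_in_id x : P x -> alg_closure_in P x.
Proof.
move=> /subfield_memP Px; apply/alg_closure_inE.
exact: (algebraic_id _ (Sub x Px : subfield_elt)).
Qed.

Lemma alg_closure_in_subfield : is_subfield (alg_closure_in P).
Proof.
split; [exact/alg_closure_in_id/subfield0 | exact/alg_closure_in_id/subfield1 | | |].
- move=> x y /alg_closure_inE Ax /alg_closure_inE Ay.
  exact/alg_closure_inE/algebraic_sub.
- move=> x y /alg_closure_inE Ax /alg_closure_inE Ay.
  exact/alg_closure_inE/algebraic_mul.
- by move=> x /alg_closure_inE Ax _; apply/alg_closure_inE/algebraic_inv.
Qed.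

Lemma subfield_submx m k (A : 'M[F]_(m, k)) (b : 'rV[F]_k) :
  (forall i j, P (A i j)) -> (forall j, P (b 0 j)) -> (b <= A)%MS ->
  exists2 u : 'rV[F]_m, forall j, P (u 0 j) & u *m A = b.
Proof.
move=> PA Pb.
pose lift x (Px : P x) : subfield_elt := Sub x (introT (subfield_memP x) Px).
pose A' := \matrix_(i, j) lift _ (PA i j).
pose b' := \row_j lift _ (Pb j).
have -> : A = map_mx val A' by apply/matrixP=> i j; rewrite !mxE SubK.
have -> : b = map_mx val b' by apply/matrixP=> i j; rewrite !mxE ord1 SubK.
rewrite map_submx => /submxP[u ->].
exists (map_mx val u); last by rewrite map_mxM.
by move=> j; rewrite mxE; apply/subfield_memP/valP.
Qed.

Lemma subfield_linear_solution (T E : finType) (a : T -> E -> F) (b : E -> F) :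
  (forall t e, P (a t e)) -> (forall e, P (b e)) ->
  (exists c : T -> F, forall e, \sum_t c t * a t e = b e) ->
  exists2 c : T -> F, forall t, P (c t) & forall e, \sum_t c t * a t e = b e.
Proof.
move=> Pa Pb [c0 c0E].
pose A := \matrix_(i < #|T|, j < #|E|) a (enum_val i) (enum_val j).
pose B := \row_(j < #|E|) b (enum_val j).
have sumE (u : T -> F) e :
    \sum_t u t * a t e = \sum_(i < #|T|) u (enum_val i) * a (enum_val i) e.
  by rewrite (big_enum_val (A := predT) (fun t => u t * a t e)).
have /(subfield_submx) [] : (B <= A)%MS.
- apply/submxP; exists (\row_i c0 (enum_val i)); apply/matrixP=> i j.
  by rewrite !mxE -c0E sumE; apply: eq_bigr => l _; rewrite !mxE.
- by move=> i j; rewrite mxE.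
- by move=> j; rewrite mxE.
move=> u Pu /matrixP uE; exists (fun t => u 0 (enum_rank t)) => // e.
move: (uE 0 (enum_rank e)); rewrite !mxE enum_rankK => <-; rewrite sumE.
by apply: eq_bigr => l _; rewrite !mxE enum_valK enum_rankK.
Qed.
End Subfield.

Section Polynomials.
Variables (F : fieldType) (n : nat).
Implicit Types (p q : {mpoly F[n]}) (P Q : F -> Prop) (gens : seq {mpoly F[n]}).

Lemma mOver_mono P Q p : (forall x, P x -> Q x) -> mOver P p -> mOver Q p.
Proof. by move=> PQ Pp m; apply/PQ/Pp. Qed.

Lemma in_ideal_mono P Q gens p :
  (forall x, P x -> Q x) -> in_ideal P gens p -> in_ideal Q gens p.
Proof. by move=> PQ [cs [? Pcs ?]]; exists cs; split=> // c /Pcs; apply: mOver_mono. Qed.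

Lemma in_idealE P gens p : in_ideal P gens p <->
  exists2 f : 'I_(size gens) -> {mpoly F[n]},
    forall i, mOver P (f i) & p = \sum_(i < size gens) f i * gens`_i.
Proof.
split=> [[cs [cs_size Pcs ->]] | [f Pf ->]].
  by exists (fun i => cs`_i) => // i; apply/Pcs/mem_nth; rewrite cs_size.
exists [seq f i | i <- enum 'I_(size gens)]; split.
- by rewrite size_map size_enum_ord.
- by move=> c /mapP[i _ ->].
- by apply: eq_bigr => i _; rewrite (nth_map i) ?size_enum_ord // nth_ord_enum.
Qed.

Section Derivation.
Variable d : n.-tuple {mpoly F[n]}.

Lemma derD p q : der d (p + q) = der d p + der d q.
Proof.
by rewrite /der -big_split; apply: eq_bigr => i _; rewrite mderivD mulrDr.
Qed.

Lemma derZ c p : der d (c *: p) = c *: der d p.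
Proof.
by rewrite /der scaler_sumr; apply: eq_bigr => i _; rewrite mderivZ scalerAr.
Qed.

Lemma der_sum (I : Type) (r : seq I) (G : I -> {mpoly F[n]}) :
  der d (\sum_(i <- r) G i) = \sum_(i <- r) der d (G i).
Proof.
apply: (big_morph _ derD); rewrite /der big1 // => i _.
by rewrite mderiv0 mulr0.
Qed.

Lemma derM p q : der d (p * q) = der d p * q + p * der d q.
Proof.
rewrite /der mulr_suml mulr_sumr -big_split; apply: eq_bigr => i _.
by rewrite mderivM mulrDr [tnth d i * (_ * q)]mulrA [tnth d i * (p * _)]mulrCA.
Qed.

Lemma iter_derD N p q :
  iter N (der d) (p + q) = iter N (der d) p + iter N (der d) q.
Proof. by elim: N => //= N ->; rewrite derD. Qed.

Lemma iter_derZ N c p : iter N (der d) (c *: p) = c *: iter N (der d) p.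
Proof. by elim: N => //= N ->; rewrite derZ. Qed.
End Derivation.

Lemma mcoeff_span (T : finType) (c : T -> F) (v : T -> {mpoly F[n]}) m :
  (\sum_t c t *: v t)@_m = \sum_t c t * (v t)@_m.
Proof. by rewrite raddf_sum; apply: eq_bigr => t _; apply: mcoeffZ. Qed.

Definition nilpotent_mod P d gens p := exists N, in_ideal P gens (iter N (der d) p).

Section OverSubfield.
Variables (P : F -> Prop) (d : n.-tuple {mpoly F[n]}).
Hypotheses (HP : is_subfield P) (Pd : forall i, mOver P (tnth d i)).

Lemma mOver0 : mOver P (0 : {mpoly F[n]}).
Proof. by move=> m; rewrite mcoeff0; apply: subfield0. Qed.

Lemma mOverD p q : mOver P p -> mOver P q -> mOver P (p + q).
Proof. by move=> Pp Pq m; rewrite mcoeffD; apply: subfieldD. Qed.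

Lemma mOverB p q : mOver P p -> mOver P q -> mOver P (p - q).
Proof. by move=> Pp Pq m; rewrite mcoeffB; apply: subfieldB. Qed.

Lemma mOverZ c p : P c -> mOver P p -> mOver P (c *: p).
Proof. by move=> Pc Pp m; rewrite mcoeffZ; apply: subfieldM. Qed.

Lemma mOverM p q : mOver P p -> mOver P q -> mOver P (p * q).
Proof.
by move=> Pp Pq m; rewrite mcoeffM; apply: subfield_sum => // mm; apply: subfieldM.
Qed.

Lemma mOver_sum (I : Type) (r : seq I) (G : I -> {mpoly F[n]}) :
  (forall i, mOver P (G i)) -> mOver P (\sum_(i <- r) G i).
Proof. by move=> PG; apply: big_ind => //; [exact: mOver0 | exact: mOverD]. Qed.

Lemma mOverC c : P c -> mOver P (c%:MP : {mpoly F[n]}).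
Proof.
by move=> Pc m; rewrite mcoeffC; apply: subfieldM => //; apply: subfield_nat.
Qed.

Lemma mOverX m : mOver P ('X_[m] : {mpoly F[n]}).
Proof. by move=> m'; rewrite mcoeffX; apply: subfield_nat. Qed.

Lemma mOver_mderiv i p : mOver P p -> mOver P (mderiv i p).
Proof.
move=> Pp; apply: mOver_sum => m; apply/mOverZ/mOverX.
by apply: subfieldM => //; apply: subfield_nat.
Qed.

Lemma mOver_iter_der N p : mOver P p -> mOver P (iter N (der d) p).
Proof.
move=> Pp; elim: N => //= N IHN; apply: mOver_sum => i.
exact/mOverM/mOver_mderiv.
Qed.

Lemma in_ideal0 gens : in_ideal P gens 0.
Proof.
apply/in_idealE; exists (fun=> 0); first by move=> _; apply: mOver0.
by rewrite big1 // => i _; rewrite mul0r.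
Qed.

Lemma in_idealD gens p q :
  in_ideal P gens p -> in_ideal P gens q -> in_ideal P gens (p + q).
Proof.
move=> /in_idealE[f Pf ->] /in_idealE[g Pg ->]; apply/in_idealE.
exists (fun i => f i + g i); first by move=> i; apply: mOverD.
by rewrite -big_split; apply: eq_bigr => i _; rewrite mulrDl.
Qed.

Lemma in_idealMl gens c p :
  mOver P c -> in_ideal P gens p -> in_ideal P gens (c * p).
Proof.
move=> Pc /in_idealE[f Pf ->]; apply/in_idealE.
exists (fun i => c * f i); first by move=> i; apply: mOverM.
by rewrite mulr_sumr; apply: eq_bigr => i _; rewrite mulrA.
Qed.

Lemma in_idealZ gens c p : P c -> in_ideal P gens p -> in_ideal P gens (c *: p).
Proof. by move=> Pc; rewrite -mul_mpolyC; apply/in_idealMl/mOverC. Qed.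

Lemma in_ideal_sum gens (I : Type) (r : seq I) (G : I -> {mpoly F[n]}) :
  (forall i, in_ideal P gens (G i)) -> in_ideal P gens (\sum_(i <- r) G i).
Proof. by move=> PG; apply: big_ind => //; [exact: in_ideal0 | exact: in_idealD]. Qed.

Lemma in_ideal_mul_nth gens i c : mOver P c -> in_ideal P gens (c * gens`_i).
Proof.
move=> Pc; case: (ltnP i (size gens)) => [lti | /(nth_default 0) ->]; last first.
  by rewrite mulr0; apply: in_ideal0.
apply/in_idealE; exists (fun j => if val j == i then c else 0).
  by move=> j; case: ifP => _ //; apply: mOver0.
rewrite (bigD1 (Ordinal lti)) //= eqxx big1 ?addr0 // => j.
by rewrite -val_eqE /= => /negbTE ->; rewrite mul0r.
Qed.

Lemma mpoly_span_descent (T : finType) (v : T -> {mpoly F[n]}) p :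
  (forall t, mOver P (v t)) -> mOver P p ->
  (exists c : T -> F, p = \sum_t c t *: v t) ->
  exists2 c : T -> F, forall t, P (c t) & p = \sum_t c t *: v t.
Proof.
move=> Pv Pp [c0 pE].
pose K := maxn (msize p) (\max_t msize (v t))%N.
have vK t : (msize (v t) <= K)%N by rewrite leq_max (leq_bigmax t) orbT.
have pK : (msize p <= K)%N by rewrite leq_max leqnn.
have [|c Pc cE] := @subfield_linear_solution F P HP T 'X_{1..n < K}
    (fun t m => (v t)@_m) (fun m => p@_m) (fun t m => Pv t m) (fun m => Pp m).
  by exists c0 => m; rewrite [in RHS]pE mcoeff_span.
exists c => //; apply/mpolyP=> m; rewrite mcoeff_span.
(* Below degree K this is the linear system solved by c; above it both sides vanish. *)
have [mK | Km] := ltnP (mdeg m) K; first exact: (esym (cE (BMultinom mK))).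
have outside q : (msize q <= K)%N -> q@_m = 0.
  by move=> qK; apply/memN_msupp_eq0/msize_mdeg_ge/(leq_trans qK).
by rewrite outside // big1 // => t _; rewrite outside ?mulr0.
Qed.

Lemma in_ideal_descent gens p :
  (forall g, g \in gens -> mOver P g) -> mOver P p ->
  in_ideal (fun _ => True) gens p -> in_ideal P gens p.
Proof.
move=> Pgens Pp /in_idealE[f _ pE].
pose K := (\max_i msize (f i))%N.
pose v (im : 'I_(size gens) * 'X_{1..n < K}) := 'X_[im.2] * gens`_im.1.
have spanE (c : _ -> F) : \sum_im c im *: v im =
    \sum_i (\sum_(m : 'X_{1..n < K}) c (i, m) *: 'X_[m]) * gens`_i.
  under [RHS]eq_bigr do rewrite mulr_suml.
  by rewrite pair_big; apply: eq_bigr => -[i m] _; rewrite scalerAl.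
have Pv im : mOver P (v im).
  apply: mOverM; first exact: mOverX.
  case: (ltnP im.1 (size gens)) => [lti|/(nth_default 0) ->].
    exact/Pgens/mem_nth.
  exact: mOver0.
have [|c Pc ->] := mpoly_span_descent Pv Pp.
  exists (fun im : _ * 'X_{1..n < K} => (f im.1)@_im.2); rewrite spanE pE.
  by apply: eq_bigr => i _; rewrite /= -mpolywE // (leq_bigmax i).
rewrite spanE; apply/in_idealE; eexists=> // i.
by apply: mOver_sum => m; apply/mOverZ/mOverX.
Qed.

Section StableIdeal.
Variable gens : seq {mpoly F[n]}.
Hypothesis Dgens : forall g, g \in gens -> in_ideal P gens (der d g).

Lemma in_ideal_der p : in_ideal P gens p -> in_ideal P gens (der d p).
Proof.
move=> /in_idealE[f Pf ->]; rewrite der_sum; apply: in_ideal_sum => i.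
rewrite derM; apply: in_idealD; first exact/in_ideal_mul_nth/(mOver_iter_der 1).
by apply/in_idealMl/Dgens/mem_nth.
Qed.

Lemma in_ideal_iter_der N p :
  in_ideal P gens p -> in_ideal P gens (iter N (der d) p).
Proof. by move=> Ip; elim: N => //= N; apply: in_ideal_der. Qed.

Lemma nilpotent_modD p q : nilpotent_mod P d gens p -> nilpotent_mod P d gens q ->
  nilpotent_mod P d gens (p + q).
Proof.
move=> [N Np] [M Mq]; exists (N + M)%N; rewrite iter_derD; apply: in_idealD.
  by rewrite addnC iterD; apply: in_ideal_iter_der.
by rewrite iterD; apply: in_ideal_iter_der.
Qed.

Lemma nilpotent_modZ c p :
  P c -> nilpotent_mod P d gens p -> nilpotent_mod P d gens (c *: p).
Proof. by move=> Pc [N Np]; exists N; rewrite iter_derZ; apply: in_idealZ. Qed.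
End StableIdeal.

Lemma lnd_over_descent gens : (forall g, g \in gens -> mOver P g) ->
  lnd_over (fun _ => True) d gens -> lnd_over P d gens.
Proof.
move=> Pgens lnd p Pp; have [N Np] := lnd p (fun _ => I); exists N.
by apply: in_ideal_descent => //; apply: mOver_iter_der.
Qed.
End OverSubfield.

Lemma lnd_over_extension P d gens : is_subfield P ->
  (forall g, g \in gens -> in_ideal (fun _ => True) gens (der d g)) ->
  lnd_over P d gens -> lnd_over (fun _ => True) d gens.
Proof.
move=> HP Dgens lnd p _; have HT : is_subfield (fun _ : F => True) by [].
rewrite [p]mpolyE; apply: (big_ind (nilpotent_mod _ d gens)) => [|q r|m _].
- by exists 0%N; apply: in_ideal0.
- exact: nilpotent_modD.
- apply: nilpotent_modZ => //; have [N Nm] := lnd _ (mOverX HP m).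
  by exists N; apply: in_ideal_mono Nm.
Qed.
End Polynomials.

Theorem lemma1p3 (k : closedFieldType) (n m : nat)
  (k0 : k -> Prop)
  (I : seq {mpoly k[n]}) (J : seq {mpoly k[m]})
  (phi : m.-tuple {mpoly k[n]}) (d : n.-tuple {mpoly k[n]}) :
  [pchar k] =i pred0 ->
  is_subfield k0 -> fg_subfield k0 ->
  (forall g, g \in I -> mOver k0 g) ->
  (forall g, g \in J -> mOver k0 g) ->
  (forall j, mOver k0 (tnth phi j)) ->
  (forall i, mOver k0 (tnth d i)) ->
  (forall g, g \in J -> in_ideal k0 I (comp_mpoly phi g)) ->
  (* D0 preserves I0, hence is a derivation of B0, and it is R0-trivial *)
  (forall g, g \in I -> in_ideal k0 I (der d g)) ->
  (forall j, in_ideal k0 I (der d (tnth phi j))) ->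
  (* Y0, T0 geometrically integral: already integral over k1 *)
  prime_over (alg_closure_in k0) I -> prime_over (alg_closure_in k0) J ->
  prime_over (fun _ => True) I -> prime_over (fun _ => True) J ->
  dominant_over k0 I J phi -> dominant_over (fun _ => True) I J phi ->
  (* general fibres of f are irreducible and reduced *)
  (exists h : {mpoly k[m]}, ~ in_ideal (fun _ => True) J h /\
     forall a : 'I_m -> k, point_over (fun _ => True) J a -> h.@[a] != 0 ->
       prime_over (fun _ => True) (fiber_gens I phi a)) ->
  (forall a : 'I_m -> k, point_over (fun _ => True) J a ->
     lnd_over (fun _ => True) d (fiber_gens I phi a)) ->
  (* (1) *)
  (forall a : 'I_m -> k, point_over (alg_closure_in k0) J a ->
     lnd_over (alg_closure_in k0) d (fiber_gens I phi a))
  /\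
  (* (2) *)
  (lnd_over (alg_closure_in k0) d I <-> lnd_over (fun _ => True) d I).
Proof.
move=> _ k0_subfield _ k0I _ k0phi k0d _ DI _ _ _ _ _ _ _ _ lnd_fibers.
have k1_subfield := alg_closure_in_subfield k0_subfield.
have k0k1 (p : {mpoly k[n]}) : mOver k0 p -> mOver (alg_closure_in k0) p.
  by apply: mOver_mono; apply: alg_closure_in_id.
have k1d i := k0k1 _ (k0d i).
have k1I g (Ig : g \in I) := k0k1 _ (k0I g Ig).
split=> [a [k1a aJ] | ].
  apply: lnd_over_descent (lnd_fibers a (conj (fun _ => Logic.I) aJ)) => // g.
  rewrite mem_cat => /orP[/k1I // | /mapP[j _ ->]].
  apply: (mOverB k1_subfield); first exact/k0k1/k0phi.
  exact/(mOverC k1_subfield)/k1a.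
split; last exact: lnd_over_descent.
by apply: lnd_over_extension k1_subfield _ => g /DI; apply: in_ideal_mono.
Qed.
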